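(* Let $\tau_i$ be an HC task that switches to HC mode at time $t_i\le t$, and suppose $D_i-D_i^L\le t-t_i<D_i$. Then $\tau_i$ generates maximal demand during $[0,t)$ with a release sequence in which successive jobs are released as soon as possible (every $T_i$ time units) and the first job is released either at time $0$ or at time $t-D_i-\lfloor (t-D_i)/T_i\rfloor\cdot T_i$.
   Context: A mixed-criticality sporadic task is $\tau_i=(T_i,L_i,\{C_i^L,C_i^H\},D_i)$: jobs are released with minimum separation $T_i$, $L_i\in\{LC,HC\}$, $D_i\le T_i$ is the relative deadline, and $C_i^L<C_i^H$ for HC tasks. Each task has a tightened deadline $D_i^L\le D_i$. An HC task is in LC mode until the instant $t_i$ at which some job requests to execute for more than $C_i^L$; from then on it is in HC mode. While in LC mode, a job released at $r$ must receive $C_i^L$ time units by $r+D_i^L$; once the task is in HC mode, a job may require up to $C_i^H$ units in total, to be received by its actual deadline $r+D_i$. The demand of a task during $[0,t)$ is the amount of execution that must be completed within $[0,t)$ in order to meet all of its deadlines that fall in $[0,t)$; execution with deadline after $t$ contributes no demand. ''Maximal demand'' is over all legal release sequences (minimum separation $T_i$) and all legal execution behaviours. *)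

(* time and execution amounts live in an archimedean
   real field R (a realType), so that floor is available. *)
From mathcomp Require Import all_boot all_order all_algebra.
From mathcomp Require Import reals.
Set Implicit Arguments. Unset Strict Implicit. Unset Printing Implicit Defensive.
Import Order.TTheory GRing.Theory Num.Theory.
Local Open Scope ring_scope.

(* A mixed-criticality sporadic task (T, L, {C^L, C^H}, D) with a tightened
   deadline D^L.  The criticality level is recorded as a boolean [hc]. *)
Record mctask (R : realType) := MCTask {
  period : R;
  hc : bool;
  cL : R;
  cH : R;
  dl : R;
  dlL : R          (* D_i^L : tightened (LC-mode) deadline *)
}.

Definition wf_hc_task (R : realType) (tk : mctask R) : Prop :=
  hc tk /\ 0 < period tk /\ 0 <= cL tk /\ cL tk < cH tk /\
  0 < dlL tk /\ dlL tk <= dl tk /\ dl tk <= period tk.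

(* A (finite prefix of a) legal release sequence: release times are >= 0 and
   successive releases are separated by at least T. *)
Definition legal_releases (R : realType) (tk : mctask R) (s : seq R) : bool :=
  all (fun r => 0 <= r) s && sorted (fun a b => a + period tk <= b) s.

(* Maximal (over legal execution behaviours) demand, within [0,t), of a
   single job released at r, for a task switching to HC mode at time ti:
   - if its LC deadline r + D^L is not after ti, the job lives entirely in
     LC mode and needs C^L by r + D^L;
   - otherwise the task is in HC mode before the job's LC deadline, and the
     job may need up to C^H by its actual deadline r + D.
   Only deadlines d with d <= t (i.e. execution within [0,t)) count. *)
Definition job_demand (R : realType) (tk : mctask R) (ti t r : R) : R :=
  if r + dlL tk <= ti then (if r + dlL tk <= t then cL tk else 0)
  else (if r + dl tk <= t then cH tk else 0).

Definition demand (R : realType) (tk : mctask R) (ti t : R) (s : seq R) : R :=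
  \sum_(r <- s) job_demand tk ti t r.

(* Release sequence where jobs are released as soon as possible (every T),
   the first one at r0; n jobs (later jobs are irrelevant for [0,t)). *)
Definition asap_releases (R : realType) (tk : mctask R) (r0 : R) (n : nat)
  : seq R := [seq r0 + k%:R * period tk | k <- iota 0 n].

From mathcomp Require Import all_boot all_order all_algebra.
From mathcomp Require Import reals.
From mathcomp Require Import lra.
Set Implicit Arguments. Unset Strict Implicit. Unset Printing Implicit Defensive.
Import Order.TTheory GRing.Theory Num.Theory.
Local Open Scope ring_scope.

(* Put a := t_i - D^L and b := t - D.  A job released at r needs C^L within
   [0, t) if r <= a, C^H if a < r <= b, and nothing otherwise; as
   b - a < D^L <= T, a legal sequence releases at most one job in (a, b].
   Without such a job the demand is C^L times the number of releases in
   [0, a], which releasing every T from time 0 maximises.  With one, the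
   earlier releases lie in [0, a] and number at most floor(b/T); releasing
   every T so that the last job is released exactly at b attains both
   bounds.  The better of these two sequences dominates every legal one. *)

Section SeparatedSequences.

Variable R : realDomainType.

Lemma sep_trans (T : R) : 0 <= T -> transitive (fun a b : R => a + T <= b).
Proof. by move=> T_ge0 b a c /= ab bc; lra. Qed.

Lemma sep_count_lower_bound (T m x : R) (n : nat) (s : seq R) : 0 <= T ->
  all (fun r => m <= r) s -> sorted (fun a b => a + T <= b) s ->
  (n < count (fun r => (r <= x)%R) s)%N -> m + n%:R * T <= x.
Proof.
move=> T_ge0; elim: s m n => [|r s IHs] m n //= /andP[mr _] sorted_rs.
have sorted_s := path_sorted sorted_rs.
have s_ge : all (fun y => r + T <= y) s := order_path_min (sep_trans T_ge0) sorted_rs.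
case: (lerP r x) => [rx|xr] /=.
- case: n => [_|n]; first by rewrite mul0r addr0 (le_trans mr rx).
  rewrite add1n ltnS => /(IHs _ _ s_ge sorted_s).
  by rewrite -natr1 mulrDl mul1r; lra.
- rewrite add0n => /(IHs _ _ s_ge sorted_s).
  by have := mulr_ge0 (ler0n _ n) T_ge0; lra.
Qed.

Lemma sep_count_window_le1 (T c x : R) (s : seq R) : 0 <= T ->
  x - c < T -> sorted (fun a b => a + T <= b) s ->
  (count (fun r => (c < r <= x)%R) s <= 1)%N.
Proof.
move=> T_ge0 short sorted_s; rewrite leqNgt; apply/negP => two.
pose w := [seq r <- s | c < r].
have w_ge : all (fun r => c <= r) w.
  by rewrite all_filter; apply/allP => r _; apply/implyP => /ltW.
have w_count : count (fun r => r <= x) w = count (fun r => c < r <= x) s.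
  by rewrite count_filter; apply: eq_count => r; rewrite /= andbC.
have w_sorted : sorted (fun a b => a + T <= b) w.
  by apply: sorted_filter => //; apply: sep_trans.
rewrite -w_count in two.
by have := sep_count_lower_bound T_ge0 w_ge w_sorted two; rewrite mul1r; lra.
Qed.

End SeparatedSequences.

Lemma count_le_split (R : realDomainType) (a b : R) (s : seq R) : a <= b ->
  count (fun r => r <= b) s =
  addn (count (fun r => r <= a) s) (count (fun r => a < r <= b) s).
Proof.
move=> ab; elim: s => //= r s ->.
case: (lerP r a) => [ra|ar] /=; first by rewrite (le_trans ra ab) addnA.
by rewrite add0n addnCA.
Qed.

Lemma path_iota_succ (e : rel nat) (m n : nat) :
  (forall i, e i i.+1) -> path e m (iota m.+1 n).
Proof. by move=> e_succ; elim: n m => //= n IHn m; rewrite e_succ IHn. Qed.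

Lemma sep_count_le_floor (R : archiRealFieldType) (T x : R) (s : seq R) : 0 < T ->
  all (fun r => 0 <= r) s -> sorted (fun a b => a + T <= b) s ->
  (count (fun r => (r <= x)%R) s <= `|Num.floor (x / T)|.+1)%N.
Proof.
move=> T_gt0 s_ge0 s_sorted; case count_eq: count => [//|n].
have /(sep_count_lower_bound (ltW T_gt0) s_ge0 s_sorted) :
    (n < count (fun r => (r <= x)%R) s)%N by rewrite count_eq.
rewrite add0r => nT_le.
have n_le_floor : (n%:Z <= Num.floor (x / T))%R.
  by rewrite floor_ge_int ler_pdivlMr // -pmulrn.
by rewrite ltnS -lez_nat abszE (le_trans n_le_floor) // ler_norm.
Qed.

Section AsapReleases.

Variables (R : realType) (tk : mctask R).

Definition floor_periods (x : R) : int := Num.floor (x / period tk).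

Definition asap_start (x : R) : R := x - (floor_periods x)%:~R * period tk.

Lemma asap_start_ge0 (x : R) : 0 < period tk -> 0 <= asap_start x.
Proof. by move=> T_gt0; rewrite subr_ge0 -ler_pdivlMr // floor_le. Qed.

Lemma asap_releases_legal (r0 : R) (n : nat) :
  0 <= period tk -> 0 <= r0 -> legal_releases tk (asap_releases tk r0 n).
Proof.
move=> T_ge0 r0_ge0; apply/andP; split.
  by apply/allP => y /mapP[k _ ->]; rewrite addr_ge0 // mulr_ge0.
rewrite sorted_map; case: n => [|n] //=.
by apply: path_iota_succ => k /=; rewrite -natr1 mulrDl mul1r addrA lexx.
Qed.

Lemma asap_releasesSr (r0 : R) (n : nat) :
  asap_releases tk r0 n.+1 =
  rcons (asap_releases tk r0 n) (r0 + n%:R * period tk).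
Proof. by rewrite /asap_releases -addn1 iotaD map_cat /= add0n cats1. Qed.

Lemma count_asap_releases (r0 x : R) (n : nat) : 0 <= period tk ->
  r0 + n%:R * period tk <= x + period tk ->
  count (fun r => r <= x) (asap_releases tk r0 n) = n.
Proof.
move=> T_ge0 last_le.
suff all_le : all (fun r => r <= x) (asap_releases tk r0 n).
  by move: all_le; rewrite all_count size_map size_iota => /eqP.
apply/allP => y /mapP[k]; rewrite mem_iota add0n => /andP[_ k_lt_n] ->.
have : k.+1%:R * period tk <= n%:R * period tk by rewrite ler_wpM2r // ler_nat.
by rewrite -natr1 mulrDl mul1r; lra.
Qed.

Lemma count_le_asap_releases_from0 (x : R) (s : seq R) : 0 < period tk ->
  legal_releases tk s ->
  (count (fun r => (r <= x)%R) s <=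
   count (fun r => (r <= x)%R)
     (asap_releases tk 0 `|floor_periods x|.+1))%N.
Proof.
move=> T_gt0 /andP[s_ge0 s_sorted].
case count_eq: (count _ s) => [//|m].
have x_ge0 : 0 <= x.
  have /(sep_count_lower_bound (ltW T_gt0) s_ge0 s_sorted) :
      (m < count (fun r => (r <= x)%R) s)%N by rewrite count_eq.
  by rewrite add0r; apply: le_trans; rewrite mulr_ge0 // ltW.
have T_ge0 := ltW T_gt0.
rewrite -count_eq count_asap_releases //; first exact: sep_count_le_floor.
rewrite add0r -natr1 mulrDl mul1r lerD2r natr_absz ger0_norm ?floor_ge0 ?divr_ge0 //.
by rewrite -ler_pdivlMr // floor_le.
Qed.

End AsapReleases.

Section Demand.

Variables (R : realType) (tk : mctask R) (ti t : R).

Lemma demand_countE (s : seq R) : ti <= t ->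
  demand tk ti t s =
  (count (fun r => r <= ti - dlL tk) s)%:R * cL tk +
  (count (fun r => ti - dlL tk < r <= t - dl tk) s)%:R * cH tk.
Proof.
move=> ti_le_t; rewrite /demand; elim: s => [|r s IHs].
  by rewrite big_nil !mul0r addr0.
rewrite big_cons IHs /= /job_demand -!lerBrDr.
case: (lerP r (ti - dlL tk)) => r_le /=.
- have -> : r <= t - dlL tk by lra.
  by rewrite !natrD !mulrDl; lra.
- by case: (r <= t - dl tk); rewrite /= !natrD !mulrDl; lra.
Qed.

Lemma demand_le_counts (s s' : seq R) :
  ti <= t -> 0 <= cL tk -> 0 <= cH tk ->
  (count (fun r => (r <= ti - dlL tk)%R) s <=
   count (fun r => (r <= ti - dlL tk)%R) s')%N ->
  (count (fun r => (ti - dlL tk < r <= t - dl tk)%R) s <=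
   count (fun r => (ti - dlL tk < r <= t - dl tk)%R) s')%N ->
  demand tk ti t s <= demand tk ti t s'.
Proof.
move=> ti_le_t cL_ge0 cH_ge0 le_lc le_hc.
by rewrite !demand_countE // lerD // ler_wpM2r // ler_nat.
Qed.

Lemma demand_le_asap_releases_from0 (s : seq R) :
  0 < period tk -> ti <= t -> 0 <= cL tk -> 0 <= cH tk ->
  legal_releases tk s ->
  count (fun r => ti - dlL tk < r <= t - dl tk) s = 0%N ->
  demand tk ti t s <=
  demand tk ti t (asap_releases tk 0 `|floor_periods tk (ti - dlL tk)|.+1).
Proof.
move=> T_gt0 ti_le_t cL_ge0 cH_ge0 s_legal no_hc.
by apply: demand_le_counts; rewrite ?no_hc // count_le_asap_releases_from0.
Qed.

Lemma demand_le_asap_releases_to_deadline (s : seq R) :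
  0 < period tk -> ti <= t -> 0 <= cL tk -> 0 <= cH tk ->
  t - dl tk - (ti - dlL tk) < period tk -> legal_releases tk s ->
  count (fun r => ti - dlL tk < r <= t - dl tk) s = 1%N ->
  demand tk ti t s <=
  demand tk ti t (asap_releases tk (asap_start tk (t - dl tk))
                    `|floor_periods tk (t - dl tk)|.+1).
Proof.
move=> T_gt0 ti_le_t cL_ge0 cH_ge0 short /andP[s_ge0 s_sorted] one_hc.
set a := ti - dlL tk in short one_hc *; set b := t - dl tk in short one_hc *.
have /hasP[r _ /andP[ar rb]] : has (fun r => a < r <= b) s by rewrite has_count one_hc.
have ab := lt_le_trans ar rb.
have lc_le : ((count (fun r => r <= a) s)%:Z <= floor_periods tk b)%R.
  rewrite floor_ge_int ler_pdivlMr // -pmulrn -[_ * _]add0r.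
  apply: sep_count_lower_bound (ltW T_gt0) s_ge0 s_sorted _.
  by rewrite (count_le_split s (ltW ab)) one_hc addn1.
have K_ge0 : (0 <= floor_periods tk b)%R by apply: le_trans lc_le.
rewrite asap_releasesSr natr_absz ger0_norm // subrK.
apply: demand_le_counts; rewrite // -cats1 count_cat /= -/a -/b.
- rewrite count_asap_releases; last 2 first.
  + exact: ltW.
  + by rewrite /asap_start natr_absz ger0_norm // subrK; lra.
  by apply: leq_trans (leq_addr _ _); rewrite -lez_nat abszE ger0_norm.
- by rewrite one_hc ab lexx addn1.
Qed.

End Demand.

Theorem lemma4 (R : realType) (tk : mctask R) (ti t : R) :
  wf_hc_task tk ->
  0 <= ti -> ti <= t ->
  dl tk - dlL tk <= t - ti -> t - ti < dl tk ->
  exists (r0 : R) (n : nat),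
    (r0 = 0 \/
     r0 = t - dl tk - (Num.floor ((t - dl tk) / period tk))%:~R * period tk) /\
    legal_releases tk (asap_releases tk r0 n) /\
    forall s : seq R, legal_releases tk s ->
      demand tk ti t s <= demand tk ti t (asap_releases tk r0 n).
Proof.
move=> [_ [T_gt0 [cL_ge0 [cL_lt_cH [_ [dlL_le_dl dl_le_T]]]]]] _ ti_le_t _ gap_lt.
have cH_ge0 : 0 <= cH tk by lra.
have short : t - dl tk - (ti - dlL tk) < period tk by lra.
pose S0 := asap_releases tk 0 `|floor_periods tk (ti - dlL tk)|.+1.
pose S1 :=
  asap_releases tk (asap_start tk (t - dl tk)) `|floor_periods tk (t - dl tk)|.+1.
have dominated s : legal_releases tk s ->
    demand tk ti t s <= Num.max (demand tk ti t S0) (demand tk ti t S1).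
  move=> s_legal; have /andP[_ s_sorted] := s_legal; rewrite le_max.
  move: (sep_count_window_le1 (ltW T_gt0) short s_sorted).
  case hc: count => [|[|//]] _.
  - apply/orP; left; exact: demand_le_asap_releases_from0.
  - apply/orP; right; exact: demand_le_asap_releases_to_deadline.
have [le01|lt10] := lerP (demand tk ti t S0) (demand tk ti t S1).
- exists (asap_start tk (t - dl tk)), `|floor_periods tk (t - dl tk)|.+1.
  split; first by right.
  split; first exact: asap_releases_legal (ltW T_gt0) (asap_start_ge0 _ T_gt0).
  by move=> s /dominated; rewrite (max_idPr le01).
- exists 0, `|floor_periods tk (ti - dlL tk)|.+1.
  split; first by left.
  split; first exact: asap_releases_legal (ltW T_gt0) (lexx 0).
  by move=> s /dominated; rewrite (max_idPl (ltW lt10)).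
Qed.
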